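(* Let $A\in\mathbb R^{n\times n}$ be symmetric with $A\not\succeq0$ and $b\in\mathbb R^n$. Then the trust region subproblem \[ ({\rm TRS})\quad \min_{x\in\mathbb R^n}\ x^TAx+2b^Tx\quad\text{s.t.}\quad \|x\|^2\le1 \] is equivalent to (in particular has the same optimal value as) the ball-constrained convex quadratic program \[ \min_{x\in\mathbb R^n}\ x^T(A-\lambda_{\min}(A)I_n)x+2b^Tx+\lambda_{\min}(A)\quad\text{s.t.}\quad \|x\|^2\le1. \]
   Context: $\lambda_{\min}(A)$ is the smallest eigenvalue of $A$; $I_n$ is the $n\times n$ identity; $\|\cdot\|$ is the Euclidean norm. *)

From HB Require Import structures.
From mathcomp Require Import all_boot all_order all_algebra.
From mathcomp Require Import reals.
Set Implicit Arguments. Unset Strict Implicit. Unset Printing Implicit Defensive.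
Import Order.TTheory GRing.Theory Num.Theory.
Local Open Scope ring_scope.

Definition qform (R : realType) (n : nat) (M : 'M[R]_n) (x : 'cV[R]_n) : R :=
  (x^T *m M *m x) 0 0.

Definition lin (R : realType) (n : nat) (b x : 'cV[R]_n) : R := (b^T *m x) 0 0.

Definition sqnorm (R : realType) (n : nat) (x : 'cV[R]_n) : R := \sum_(i < n) x i 0 ^+ 2.

Definition sym_mx (R : realType) (n : nat) (A : 'M[R]_n) : Prop := A^T = A.

Definition psd (R : realType) (n : nat) (A : 'M[R]_n) : Prop :=
  forall x : 'cV[R]_n, 0 <= qform A x.

Definition is_lambda_min (R : realType) (n : nat) (A : 'M[R]_n) (lam : R) : Prop :=
  eigenvalue A lam /\ (forall mu : R, eigenvalue A mu -> lam <= mu).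

Definition ball_min_value (R : realType) (n : nat) (f : 'cV[R]_n -> R) (t : R) : Prop :=
  (exists x : 'cV[R]_n, sqnorm x <= 1 /\ f x = t) /\
  (forall x : 'cV[R]_n, sqnorm x <= 1 -> t <= f x).

Definition trs_obj (R : realType) (n : nat) (A : 'M[R]_n) (b x : 'cV[R]_n) : R :=
  qform A x + 2 * lin b x.

Definition cqp_obj (R : realType) (n : nat) (A : 'M[R]_n) (lam : R) (b x : 'cV[R]_n) : R :=
  qform (A - lam%:M) x + 2 * lin b x + lam.

From HB Require Import structures.
From mathcomp Require Import all_boot all_order all_algebra.
From mathcomp Require Import reals boolp classical_sets topology normedtype derive.
From mathcomp Require Import ring lra.
Import Order.TTheory GRing.Theory Num.Theory numFieldNormedType.Exports.
Set Implicit Arguments. Unset Strict Implicit. Unset Printing Implicit Defensive.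
Local Open Scope ring_scope.

(* Since [cqp_obj x = trs_obj x + lam (1 - |x|^2)] with [lam < 0], the convex
   objective lies below the TRS objective on the unit ball and agrees with it on
   the unit sphere.  Along a unit eigenvector [e] for [lam] the quadratic part of
   [cqp_obj] is constant, so a minimiser of the convex problem can be moved to the
   sphere, in the direction where [b^T e] does not increase [cqp_obj]; the point
   reached is a common minimiser of both problems.  That [lam < 0] comes from the
   Rayleigh principle: the minimum [m] of [x^T A x] on the unit sphere is attained
   at an eigenvector, because [A - m I] is positive semidefinite and its quadratic
   form vanishes there; hence [lam <= m] and [A - lam I] is positive
   semidefinite. *)

Section QuadraticForms.
Variables (R : realType) (n : nat).
Implicit Types (M : 'M[R]_n) (x y : 'cV[R]_n).

Definition bilform M x y : R := (x^T *m M *m y) 0 0.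

Lemma bilformC M x y : sym_mx M -> bilform M y x = bilform M x y.
Proof.
move=> symM; rewrite /bilform -[in LHS](trmxK (y^T *m M *m x)) [in LHS]mxE.
by rewrite !trmx_mul trmxK symM mulmxA.
Qed.

Lemma bilformDl M x y z : bilform M (x + y) z = bilform M x z + bilform M y z.
Proof. by rewrite /bilform linearD /= !mulmxDl mxE. Qed.

Lemma bilformDr M x y z : bilform M x (y + z) = bilform M x y + bilform M x z.
Proof. by rewrite /bilform mulmxDr mxE. Qed.

Lemma bilformZl M c x y : bilform M (c *: x) y = c * bilform M x y.
Proof. by rewrite /bilform linearZ /= -!scalemxAl mxE. Qed.

Lemma bilformZr M c x y : bilform M x (c *: y) = c * bilform M x y.
Proof. by rewrite /bilform -scalemxAr mxE. Qed.

Lemma qformDZ M x y t : sym_mx M ->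
  qform M (x + t *: y) = qform M x + 2 * t * bilform M x y + t ^+ 2 * qform M y.
Proof.
move=> symM; rewrite -[qform M _]/(bilform M _ _) bilformDl !bilformDr.
rewrite !bilformZl !bilformZr (bilformC x y symM) /bilform -/(qform M x) -/(qform M y).
ring.
Qed.

Lemma qformZ M c x : qform M (c *: x) = c ^+ 2 * qform M x.
Proof. by rewrite -[qform M _]/(bilform M _ _) bilformZl bilformZr mulrA expr2. Qed.

Lemma qform0 M : qform M 0 = 0.
Proof. by rewrite /qform mulmx0 mxE. Qed.

Lemma sqnorm_qform x : sqnorm x = qform 1%:M x.
Proof.
by rewrite /sqnorm /qform mulmx1 mxE; apply: eq_bigr => i _; rewrite mxE expr2.
Qed.

Lemma sqnormZ c x : sqnorm (c *: x) = c ^+ 2 * sqnorm x.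
Proof. by rewrite !sqnorm_qform qformZ. Qed.

Lemma qformBscalar M c x : qform (M - c%:M) x = qform M x - c * sqnorm x.
Proof.
rewrite sqnorm_qform /qform mulmxBr mulmxBl mul_mx_scalar -scalemxAl mulmx1.
by rewrite !mxE.
Qed.

Lemma linDZ b x y t : lin b (x + t *: y) = lin b x + t * lin b y.
Proof. by rewrite /lin mulmxDr -scalemxAr !mxE. Qed.

Lemma sym_mxBscalar M c : sym_mx M -> sym_mx (M - c%:M).
Proof. by move=> symM; rewrite /sym_mx linearB /= tr_scalar_mx symM. Qed.

Lemma sqr_coord_le_sqnorm x i : x i 0 ^+ 2 <= sqnorm x.
Proof.
rewrite /sqnorm (bigD1 i) //= lerDl.
by apply: sumr_ge0 => j _; rewrite sqr_ge0.
Qed.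

Lemma sqnorm_ge0 x : 0 <= sqnorm x.
Proof. by apply: sumr_ge0 => i _; rewrite sqr_ge0. Qed.

Lemma sqnorm_eq0 x : (sqnorm x == 0) = (x == 0).
Proof.
apply/idP/eqP => [x0|->]; last by rewrite /sqnorm big1 // => i _; rewrite mxE expr0n.
apply/matrixP => i j; rewrite ord1 mxE; apply/eqP; rewrite -sqrf_eq0 eq_le sqr_ge0.
by rewrite -(eqP x0) sqr_coord_le_sqnorm.
Qed.

Lemma sqnorm0 : sqnorm (0 : 'cV[R]_n) = 0.
Proof. by apply/eqP; rewrite sqnorm_eq0. Qed.

Definition normalize x := (Num.sqrt (sqnorm x))^-1 *: x.

Lemma sqnorm_normalize x : x != 0 -> sqnorm (normalize x) = 1.
Proof.
rewrite -sqnorm_eq0 => x0; have x_gt0 : 0 < sqnorm x by rewrite lt_def x0 sqnorm_ge0.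
by rewrite sqnormZ exprVn sqr_sqrtr ?mulVf // ltW.
Qed.

Lemma sqnorm_line_sphere x e c : sqnorm x <= 1 -> sqnorm e = 1 ->
  exists t, sqnorm (x + t *: e) = 1 /\ t * c <= 0.
Proof.
move=> x_ball e_unit; set d := bilform 1%:M x e.
have sqnormDZ t : sqnorm (x + t *: e) = (t + d) ^+ 2 + sqnorm x - d ^+ 2.
  rewrite !sqnorm_qform qformDZ; last exact: tr_scalar_mx.
  by rewrite -!sqnorm_qform e_unit /d; ring.
have disc_ge0 : 0 <= d ^+ 2 + 1 - sqnorm x by rewrite -addrA addr_ge0 ?sqr_ge0 ?subr_ge0.
set r := Num.sqrt (d ^+ 2 + 1 - sqnorm x).
have r2 : r ^+ 2 = d ^+ 2 + 1 - sqnorm x by rewrite sqr_sqrtr.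
have /andP[r_le_d d_le_r] : - r <= d <= r.
  rewrite -ler_norml -(ler_pXn2r (isT : (0 < 2)%N)) ?nnegrE ?sqrtr_ge0 //.
  by rewrite real_normK ?num_real // r2 -addrA lerDl subr_ge0.
(* the roots [- d + r] and [- d - r] of [t |-> sqnorm (x + t e) - 1] have
   opposite signs *)
have [c_le0|c_gt0] := lerP c 0.
- exists (r - d); split; first by rewrite sqnormDZ subrK r2; ring.
  by rewrite mulr_ge0_le0 // subr_ge0.
- exists (- r - d); split; first by rewrite sqnormDZ subrK sqrrN r2; ring.
  by rewrite mulr_le0_ge0 ?(ltW c_gt0) // subr_le0.
Qed.

Lemma quadratic_ge0_lin_eq0 (a c : R) :
  (forall t, 0 <= 2 * t * a + t ^+ 2 * c) -> a = 0.
Proof.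
move=> ge0; set u := (`|c| + 1)^-1.
have u_gt0 : 0 < u by rewrite invr_gt0 ltr_wpDl.
have uc_lt1 : u * c < 1.
  have : u * (`|c| + 1) = 1 by rewrite mulVf // gt_eqF // ltr_wpDl.
  have := ler_wpM2l (ltW u_gt0) (ler_norm c); nra.
(* the value at [t = - a * u] is [a^2 u (u c - 2)], of the opposite sign *)
have at_t : 0 <= (a ^+ 2 * u) * (u * c - 2).
  by have := ge0 (- a * u); rewrite expr2; nra.
have a2u_ge0 : 0 <= a ^+ 2 * u by rewrite mulr_ge0 ?sqr_ge0 ?ltW.
have /eqP : a ^+ 2 * u = 0 by nra.
by rewrite mulf_eq0 (gt_eqF u_gt0) orbF sqrf_eq0 => /eqP.
Qed.

Lemma psd_qform_eq0 M x : sym_mx M -> psd M -> qform M x = 0 -> M *m x = 0.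
Proof.
move=> symM psdM qx0; set w := M *m x.
have bil_w : bilform M x w = sqnorm w.
  by rewrite sqnorm_qform /qform mulmx1 /bilform -{1}symM -trmx_mul.
apply/eqP; rewrite -sqnorm_eq0; apply/eqP.
apply: (@quadratic_ge0_lin_eq0 _ (qform M w)) => t.
by have := psdM (x + t *: w); rewrite qformDZ // qx0 bil_w add0r.
Qed.

Lemma sym_eigenvalueP M m : sym_mx M ->
  reflect (exists2 x : 'cV_n, M *m x = m *: x & x != 0) (eigenvalue M m).
Proof.
move=> symM; apply: (iffP eigenvalueP) => -[v vM v0]; exists v^T;
  by [rewrite -{1}symM -trmx_mul vM linearZ | rewrite trmx_eq0].
Qed.

Lemma qform_ge_sphere M m z :
  (forall y, sqnorm y = 1 -> m <= qform M y) -> m * sqnorm z <= qform M z.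
Proof.
move=> ge_m; have [->|z0] := eqVneq z 0; first by rewrite qform0 sqnorm0 mulr0.
have := ge_m _ (sqnorm_normalize z0); rewrite qformZ exprVn sqr_sqrtr ?sqnorm_ge0 //.
have z_gt0 : 0 < sqnorm z by rewrite lt_def sqnorm_eq0 z0 sqnorm_ge0.
by rewrite ler_pdivlMl // mulrC.
Qed.

End QuadraticForms.

(* Compactness (Heine-Borel, [rV_compact]) is available for row vectors, so
   subsets of the ball are handled through the transpose. *)
Section UnitBallMinimum.
Local Open Scope classical_set_scope.
Variables (R : realType) (n : nat).

Lemma continuous_sum (T : topologicalType) (I : finType) (F : I -> T -> R) :
  (forall i, continuous (F i)) -> continuous (fun x => \sum_i F i x).
Proof.
by move=> cF; apply: (@continuous_big R^o _ +%R 0 xpredT add_continuous) => i _.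
Qed.

Lemma qform_trmx_continuous (M : 'M[R]_n) :
  continuous (fun v : 'rV[R]_n => qform M v^T).
Proof.
have qE v : qform M v^T = \sum_j (\sum_i v 0 i * M i j) * v 0 j.
  rewrite /qform mxE; apply: eq_bigr => j _; rewrite !mxE; congr (_ * _).
  by apply: eq_bigr => i _; rewrite !mxE.
rewrite (funext qE); apply: continuous_sum => j v.
apply: continuousM; last exact: coord_continuous.
apply: continuous_sum => i {}v.
by apply: continuousM; [exact: coord_continuous | exact: cst_continuous].
Qed.

Lemma lin_trmx_continuous (b : 'cV[R]_n) :
  continuous (fun v : 'rV[R]_n => lin b v^T).
Proof.
have linE v : lin b v^T = \sum_i b i 0 * v 0 i.
  by rewrite /lin mxE; apply: eq_bigr => i _; rewrite !mxE.
rewrite (funext linE); apply: continuous_sum => i v.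
by apply: continuousM; [exact: cst_continuous | exact: coord_continuous].
Qed.

Lemma trs_obj_trmx_continuous (M : 'M[R]_n) (b : 'cV[R]_n) :
  continuous (fun v : 'rV[R]_n => trs_obj M b v^T).
Proof.
move=> v; apply: (@continuousD _ R^o _ (fun v => qform M v^T) (fun v => 2 * lin b v^T)).
  exact: qform_trmx_continuous.
by apply: continuousM; [exact: cst_continuous | exact: lin_trmx_continuous].
Qed.

Lemma sqnorm_constrained_min (K : set R) (f : 'cV[R]_n -> R) :
  closed K -> K `<=` [set r | r <= 1] -> (exists x : 'cV[R]_n, K (sqnorm x)) ->
  continuous (fun v : 'rV[R]_n => f v^T) ->
  exists2 x, K (sqnorm x) & forall y, K (sqnorm y) -> f x <= f y.
Proof.
move=> clK K_le1 [x0 Kx0] cf.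
pose S := [set v : 'rV[R]_n | K (sqnorm v^T)].
have clS : closed S.
  apply: preimage_closed clK => ? _.
  rewrite (funext (fun v : 'rV[R]_n => sqnorm_qform v^T)).
  exact: qform_trmx_continuous.
have S_box : S `<=` [set v | forall i, `[-1, 1]%classic (v ord0 i)].
  move=> v /K_le1/= Sv i; have := sqr_coord_le_sqnorm v^T i.
  rewrite mxE (_ : 0 = ord0 :> 'I_1) //= in_itv /= => ?; apply/andP; split; nra.
have compS : compact S.
  apply: subclosed_compact clS _ S_box.
  exact: (@rV_compact R n (fun=> `[-1, 1]%classic) (fun=> @segment_compact R (-1) 1)).
have S0 : S !=set0 by exists x0^T; rewrite /S /= trmxK.
have [v Sv vmin] := EVT_min_rV S0 compS (continuous_subspaceT cf).
exists v^T; first by move: Sv; rewrite inE.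
by move=> y Ky; have := vmin y^T; rewrite trmxK; apply; rewrite inE /S /= trmxK.
Qed.

End UnitBallMinimum.

Section TrustRegion.
Variables (R : realType) (n : nat) (A : 'M[R]_n) (b : 'cV[R]_n) (lam : R).
Hypothesis symA : sym_mx A.

Lemma psd_sub_lambda_min : is_lambda_min A lam -> psd (A - lam%:M).
Proof.
move=> [/(sym_eigenvalueP _ symA) [v _ v0] lam_min].
have [x0 x0_unit x0_min] : exists2 x0 : 'cV_n,
    sqnorm x0 = 1 & forall y, sqnorm y = 1 -> qform A x0 <= qform A y.
  apply: (@sqnorm_constrained_min _ _ [set r | r = 1]).
  - exact: closed_eq.
  - by move=> r /= ->.
  - by exists (normalize v); exact: sqnorm_normalize.
  - exact: qform_trmx_continuous.
set m := qform A x0.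
have psd_m : psd (A - m%:M).
  by move=> z; rewrite qformBscalar subr_ge0 qform_ge_sphere.
have Ax0 : A *m x0 = m *: x0.
  apply/eqP; rewrite -subr_eq0 -mul_scalar_mx -mulmxBl; apply/eqP.
  apply: psd_qform_eq0 (sym_mxBscalar _ symA) psd_m _.
  by rewrite qformBscalar x0_unit mulr1 subrr.
have x0_neq0 : x0 != 0 by rewrite -sqnorm_eq0 x0_unit oner_neq0.
have lam_le_m : lam <= m by apply/lam_min/(sym_eigenvalueP _ symA); exists x0.
move=> z; rewrite qformBscalar subr_ge0 (le_trans _ (qform_ge_sphere z x0_min)) //.
by rewrite ler_wpM2r ?sqnorm_ge0.
Qed.

Lemma lambda_min_lt0 : ~ psd A -> is_lambda_min A lam -> lam < 0.
Proof.
move=> npsd lamA; rewrite ltNge; apply/negP => lam_ge0; apply: npsd => z.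
have := psd_sub_lambda_min lamA z; rewrite qformBscalar subr_ge0; apply: le_trans.
by rewrite mulr_ge0 ?sqnorm_ge0.
Qed.

Lemma cqp_objE x : cqp_obj A lam b x = trs_obj A b x + lam * (1 - sqnorm x).
Proof. by rewrite /cqp_obj /trs_obj qformBscalar; ring. Qed.

Lemma cqp_objDZ_ker x e t : (A - lam%:M) *m e = 0 ->
  cqp_obj A lam b (x + t *: e) = cqp_obj A lam b x + 2 * t * lin b e.
Proof.
move=> Be; have bil_e y : bilform (A - lam%:M) y e = 0.
  by rewrite /bilform -mulmxA Be mulmx0 mxE.
rewrite /cqp_obj qformDZ ?linDZ ?bil_e; last exact: sym_mxBscalar.
by rewrite -[qform _ e]/(bilform _ e e) bil_e; ring.
Qed.

Lemma cqp_obj_trmx_continuous : continuous (fun v : 'rV[R]_n => cqp_obj A lam b v^T).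
Proof.
move=> v; apply: (@continuousD _ R^o _ (fun v => trs_obj (A - lam%:M) b v^T) (fun=> lam)).
  exact: trs_obj_trmx_continuous.
exact: cst_continuous.
Qed.

End TrustRegion.

Theorem corollary1 (R : realType) (n : nat) (A : 'M[R]_n) (b : 'cV[R]_n) (lam : R) :
  sym_mx A -> ~ psd A -> is_lambda_min A lam ->
  exists t : R,
    ball_min_value (fun x => trs_obj A b x) t /\
    ball_min_value (fun x => cqp_obj A lam b x) t.
Proof.
move=> symA npsd lamA; have lam_lt0 := lambda_min_lt0 symA npsd lamA.
have [v Av v0] := sym_eigenvalueP _ symA lamA.1.
set e := normalize v; have e_unit : sqnorm e = 1 := sqnorm_normalize v0.
have Be : (A - lam%:M) *m e = 0.
  by rewrite -scalemxAr mulmxBl Av mul_scalar_mx subrr scaler0.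
have [xs xs_ball xs_min] : exists2 xs, sqnorm xs <= 1 &
    forall y, sqnorm y <= 1 -> cqp_obj A lam b xs <= cqp_obj A lam b y.
  apply: (@sqnorm_constrained_min _ _ [set r | r <= 1]).
  - exact: closed_le.
  - by [].
  - by exists e; rewrite /= e_unit.
  - exact: cqp_obj_trmx_continuous.
have [t [x1_unit tL_le0]] := sqnorm_line_sphere (lin b e) xs_ball e_unit.
set x1 := xs + t *: e.
have x1_min y : sqnorm y <= 1 -> cqp_obj A lam b x1 <= cqp_obj A lam b y.
  move=> /xs_min; apply: le_trans.
  by rewrite cqp_objDZ_ker // gerDl -mulrA mulr_ge0_le0.
have cqp_x1 : cqp_obj A lam b x1 = trs_obj A b x1.
  by rewrite cqp_objE x1_unit subrr mulr0 addr0.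
exists (trs_obj A b x1); split; split.
- by exists x1; rewrite x1_unit.
- move=> y y_ball; rewrite -cqp_x1 (le_trans (x1_min y y_ball)) // cqp_objE gerDl.
  by rewrite mulr_le0_ge0 ?subr_ge0 ?(ltW lam_lt0).
- by exists x1; rewrite x1_unit cqp_x1.
- by move=> y /x1_min; rewrite cqp_x1.
Qed.
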